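(* Let $V$ be a set of (three-valued) interpretations over $A$. (1) For each ADF $D$ such that $\mathrm{adm}(D)=V$, there is an adm-characterization $f_D$ for $V$; (2) for each adm-characterization $f:\mathcal{V}_2\to\mathcal{V}_2$ for $V$ we have $\mathrm{adm}(D_f)=V$.
   Context: Let $A$ be a fixed finite set of statements. An interpretation is a mapping $v:A\to\{\mathbf{t},\mathbf{f},\mathbf{u}\}$; $\mathcal{V}$ is the set of all interpretations and $\mathcal{V}_2$ the set of two-valued ones (never assigning $\mathbf{u}$). The information ordering is $\mathbf{u}<_i\mathbf{t}$, $\mathbf{u}<_i\mathbf{f}$, extended pointwise. For $v\in\mathcal{V}$, $[v]_2$ is the set of two-valued interpretations $w$ with $v\leq_i w$. An ADF is $D=(A,L,C)$ where each statement $a$ has an acceptance formula $\varphi_a$ over its parents. The operator $\Gamma_D$ maps $v$ to the interpretation assigning to each $a$ the greatest lower bound w.r.t. $\leq_i$ (consensus: $\mathbf{t}$ if all are $\mathbf{t}$, $\mathbf{f}$ if all are $\mathbf{f}$, otherwise $\mathbf{u}$) of $\{w(\varphi_a)\mid w\in[v]_2\}$. $v$ is admissible for $D$ iff $v\leq_i\Gamma_D(v)$; $\mathrm{adm}(D)$ is the set of admissible interpretations. A function $f:\mathcal{V}_2\to\mathcal{V}_2$ is an adm-characterization of $V$ iff for each $v\in\mathcal{V}$: $v\in V$ iff for every $a\in A$, $v(a)\neq\mathbf{u}$ implies $f(v_2)(a)=v(a)$ for all $v_2\in[v]_2$. For $f:\mathcal{V}_2\to\mathcal{V}_2$, $D_f$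 is the ADF whose acceptance formula for each $a$ is $\varphi^f_a=\bigvee_{w\in\mathcal{V}_2,\,f(w)(a)=\mathbf{t}}\phi_w$ with $\phi_w=\bigwedge_{w(a')=\mathbf{t}}a'\wedge\bigwedge_{w(a')=\mathbf{f}}\neg a'$. *)

From HB Require Import structures.
From mathcomp Require Import all_boot.
Set Implicit Arguments. Unset Strict Implicit. Unset Printing Implicit Defensive.

Inductive tv := TT | FF | UU.

Definition tv_to_opt (x : tv) : option bool :=
  match x with TT => Some true | FF => Some false | UU => None end.
Definition opt_to_tv (o : option bool) : tv :=
  match o with Some true => TT | Some false => FF | None => UU end.
Lemma tv_to_optK : cancel tv_to_opt opt_to_tv. Proof. by case. Qed.
HB.instance Definition _ := Finite.copy tv (can_type tv_to_optK).

Section ADFs.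
Variable A : finType.

Definition interp := {ffun A -> tv}.
Definition interp2 := {ffun A -> bool}.

Definition tv_of_bool (b : bool) : tv := if b then TT else FF.
Definition emb (w : interp2) : interp := [ffun a => tv_of_bool (w a)].

Definition le_tv (x y : tv) : bool := (x == UU) || (x == y).
Definition le_i (v v' : interp) : bool := [forall a, le_tv (v a) (v' a)].

Definition completions (v : interp) : pred interp2 := fun w => le_i v (emb w).

Inductive formula :=
| FAtom of A | FTop | FBot | FNeg of formula
| FAnd of formula & formula | FOr of formula & formula.

Fixpoint atoms (phi : formula) : seq A :=
  match phi with
  | FAtom a => [:: a]
  | FTop | FBot => [::]
  | FNeg p => atoms p
  | FAnd p q | FOr p q => atoms p ++ atoms q
  end.

Fixpoint eval (w : interp2) (phi : formula) : bool :=
  match phi with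
  | FAtom a => w a
  | FTop => true | FBot => false
  | FNeg p => ~~ eval w p
  | FAnd p q => eval w p && eval w q
  | FOr p q => eval w p || eval w q
  end.

Record ADF := mkADF { links : rel A; acc : A -> formula }.

Definition wf_ADF (D : ADF) : Prop :=
  forall a b, b \in atoms (acc D a) -> links D b a.

(* consensus (glb wrt <=_i) of {w(phi) | w in [v]_2} *)
Definition consensus (v : interp) (phi : formula) : tv :=
  if [forall w, completions v w ==> eval w phi] then TT
  else if [forall w, completions v w ==> ~~ eval w phi] then FF
  else UU.

Definition Gamma (D : ADF) (v : interp) : interp :=
  [ffun a => consensus v (acc D a)].

Definition admissible (D : ADF) (v : interp) : bool := le_i v (Gamma D v).

Definition adm_characterization (V : interp -> Prop) (f : interp2 -> interp2) : Prop :=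
  forall v : interp, V v <->
    (forall a : A, v a != UU ->
       forall v2 : interp2, completions v v2 -> emb (f v2) a = v a).

Definition phi_w (w : interp2) : formula :=
  foldr (fun a acc => FAnd (if w a then FAtom a else FNeg (FAtom a)) acc) FTop (enum A).

Definition phi_f (f : interp2 -> interp2) (a : A) : formula :=
  foldr (fun w acc => FOr (phi_w w) acc) FBot [seq w <- enum {: interp2} | f w a].

Definition D_of (f : interp2 -> interp2) : ADF :=
  mkADF (fun _ _ => true) (phi_f f).

End ADFs.

(** An ADF [D] determines the two-valued map [w |-> (a |-> w(phi_a))], and [v] is
    admissible for [D] exactly when every statement [v] decides gets the same
    value from this map at every two-valued completion of [v].  Hence this map
    is an adm-characterization of [adm(D)]; conversely, the acceptance formulas
    of [D_f] are disjunctive normal forms whose two-valued map is [f] itself,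
    and an adm-characterization determines the set it characterizes. *)

From mathcomp Require Import all_boot.
From Stdlib Require Import Setoid.

Set Implicit Arguments.
Unset Strict Implicit.
Unset Printing Implicit Defensive.

Section AdmCharacterization.
Variable A : finType.
Implicit Types (v : interp A) (w : interp2 A) (phi : formula A) (D : ADF A).

Lemma completions_exist v : exists w, completions v w.
Proof.
exists [ffun a => v a == TT]; apply/forallP => a.
by rewrite /emb !ffunE /le_tv; case: (v a).
Qed.

Lemma le_tv_consensus v phi x : x != UU ->
  le_tv x (consensus v phi) <->
  (forall w, completions v w -> tv_of_bool (eval w phi) = x).
Proof.
(* Without a completion, [consensus] would answer [TT] vacuously even for [x = FF]. *)
have [w0 vw0] := completions_exist v.
rewrite /le_tv /consensus.
case: ifP => [/forallP all_true | /forallP not_all_true];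
  [|case: ifP => [/forallP all_false | /forallP not_all_false]];
  case: x => // _ /=; split=> //.
- by move=> _ w vw; have := all_true w; rewrite vw => /= ->.
- by move=> /(_ w0 vw0); have := all_true w0; rewrite vw0 => /= ->.
- move=> all_TT; case: not_all_true => w; apply/implyP => /all_TT.
  by case: eval.
- by move=> _ w vw; have := all_false w; rewrite vw => /= /negbTE ->.
- move=> all_TT; case: not_all_true => w; apply/implyP => /all_TT.
  by case: eval.
- move=> all_FF; case: not_all_false => w; apply/implyP => /all_FF.
  by case: eval.
Qed.

Definition acc_eval D w : interp2 A := [ffun a => eval w (acc D a)].

Lemma admissible_characterization D :
  adm_characterization (admissible D) (acc_eval D).
Proof.
move=> v; rewrite /admissible /le_i; split.
- move=> /forallP v_le a va w vw; rewrite /emb !ffunE.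
  by move: (v_le a); rewrite /Gamma ffunE; move/(le_tv_consensus _ _ va); apply.
- move=> v_agrees; apply/forallP => a; rewrite /Gamma ffunE.
  have [-> // | va] := eqVneq (v a) UU.
  apply/(le_tv_consensus _ _ va) => w vw.
  by rewrite -(v_agrees a va w vw) /emb !ffunE.
Qed.

Lemma adm_characterization_ext (V V' : interp A -> Prop) f :
  (forall v, V v <-> V' v) ->
  adm_characterization V f -> adm_characterization V' f.
Proof. by move=> VV' fV v; rewrite -VV'. Qed.

Lemma eq_adm_characterization (V : interp A -> Prop) f g :
  f =1 g -> adm_characterization V f -> adm_characterization V g.
Proof.
move=> fg fV v; rewrite fV.
by split=> agree a va w vw; rewrite -(agree a va w vw) fg.
Qed.

Lemma adm_characterization_unique (V V' : interp A -> Prop) f :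
  adm_characterization V f -> adm_characterization V' f ->
  forall v, V v <-> V' v.
Proof. by move=> fV fV' v; rewrite fV fV'. Qed.

Lemma eval_foldr_FAnd (T : Type) (lit : T -> formula A) w s :
  eval w (foldr (fun x acc => FAnd (lit x) acc) (FTop A) s) =
  all (fun x => eval w (lit x)) s.
Proof. by elim: s => //= x s ->. Qed.

Lemma eval_foldr_FOr (T : Type) (lit : T -> formula A) w s :
  eval w (foldr (fun x acc => FOr (lit x) acc) (FBot A) s) =
  has (fun x => eval w (lit x)) s.
Proof. by elim: s => //= x s ->. Qed.

Lemma eval_phi_w w w' : eval w (phi_w w') = (w == w').
Proof.
rewrite /phi_w eval_foldr_FAnd.
have lit_eq a : eval w (if w' a then FAtom a else FNeg (FAtom a)) = (w a == w' a).
  by case: (w' a) => /=; case: (w a).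
rewrite (eq_all lit_eq); apply/allP/eqP => [w_eq | ->] //.
by apply/ffunP => a; apply/eqP/w_eq; rewrite mem_enum.
Qed.

Lemma eval_phi_f f w a : eval w (phi_f f a) = f w a.
Proof.
rewrite /phi_f eval_foldr_FOr (@eq_has _ _ (pred1 w)) => [|w'].
  by rewrite has_pred1 mem_filter mem_enum andbT.
by rewrite eval_phi_w eq_sym.
Qed.

Lemma acc_eval_D_of f : acc_eval (D_of f) =1 f.
Proof. by move=> w; apply/ffunP => a; rewrite ffunE eval_phi_f. Qed.

End AdmCharacterization.

Theorem proposition3 (A : finType) (V : interp A -> Prop) :
  (forall D : ADF A, wf_ADF D ->
     (forall v : interp A, admissible D v <-> V v) ->
     exists fD : interp2 A -> interp2 A, adm_characterization V fD)
  /\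
  (forall f : interp2 A -> interp2 A, adm_characterization V f ->
     forall v : interp A, admissible (D_of f) v <-> V v).
Proof.
split.
(* Admissibility ignores the links. *)
- move=> D _ admD; exists (acc_eval D).
  exact: adm_characterization_ext admD (admissible_characterization D).
- move=> f fV; apply: adm_characterization_unique fV.
  exact: eq_adm_characterization (acc_eval_D_of f) (admissible_characterization _).
Qed.
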